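(* Let $(\Theta,\mathbf{Q},\leq)$ be a $\Theta$-projective system of size $t$ in a Hom-finite triangulated $R$-category $\mathcal{T}$. Then: (a) for every $M\in\mathfrak{F}(\Theta)$ and $i\in[1,t]$, the multiplicity $[M:\Theta(i)]_\xi$ does not depend on the chosen $\Theta$-filtration $\xi$ of $M$; in particular the minimal $\Theta$-filtration length satisfies $\ell_\Theta(M)=\sum_{i=1}^t[M:\Theta(i)]$; (b) $Q(i)\not\simeq Q(j)$ if $i\neq j$.
   Context: A Hom-finite triangulated $R$-category: $R$ a commutative ring, $\mathcal{T}$ triangulated with finitely generated $R$-module Hom-sets, $R$-bilinear composition and $R$-linear shift. A $\Theta$-filtration $\xi$ of $M$: distinguished triangles $M_{k-1}\to M_k\to X_k\to M_{k-1}[1]$ ($k=0,\dots,n$), $M_{-1}=0=X_0$, $M_n=M$, $X_k\in\{\Theta(1),\dots,\Theta(t)\}$ for $k\ge1$; $\mathfrak{F}(\mathcal{X})$ is the class of objects having such filtrations by objects of $\mathcal{X}$; $[M:\Theta(i)]_\xi$ is the number of $k\in[0,n]$ with $X_k\simeq\Theta(i)$; $\ell_\Theta(M)$ is the minimum of the lengths $n$ over all $\Theta$-filtrations. A $\Theta$-projective system of size $t$: $\le$ a linear order on $[1,t]$; $\Theta(i)$ non-zero with $\mathrm{Hom}(\Theta(j),\Theta(i))=0$ for $j>i$; $Q(i)$ indecomposable with $Q=\bigoplus Q(i)$ satisfying $\mathrm{Hom}(Q,\Theta(j)[\pm1])=0$ for all $j$; for each $i$ a distinguished triangle $K(i)\to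 Q(i)\to\Theta(i)\to K(i)[1]$ with $K(i)\in\mathfrak{F}(\{\Theta(j):j>i\})$, $\mathrm{Hom}(K(i)[1],\Theta(i))=0$. *)

From HB Require Import structures.
From mathcomp Require Import all_boot all_order all_algebra.
From Stdlib Require Import ClassicalEpsilon.
Set Implicit Arguments. Unset Strict Implicit. Unset Printing Implicit Defensive.
Import Order.TTheory GRing.Theory Num.Theory.
Local Open Scope ring_scope.

Record triData (R : comPzRingType) := TriData {
  Ob : Type;
  Hom : Ob -> Ob -> lmodType R;
  comp : forall X Y Z : Ob, Hom Y Z -> Hom X Y -> Hom X Z;
  idm : forall X : Ob, Hom X X;
  shift : Ob -> Ob;
  shiftH : forall X Y : Ob, Hom X Y -> Hom (shift X) (shift Y);
  Dist : forall X Y Z : Ob, Hom X Y -> Hom Y Z -> Hom Z (shift X) -> Prop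
}.
Arguments comp {R C X Y Z} : rename.
Arguments idm {R C} X : rename.
Arguments shift {R C} X : rename.
Arguments shiftH {R C X Y} : rename.
Arguments Dist {R C X Y Z} : rename.

Section Notions.
Variables (R : comPzRingType) (C : triData R).
Local Notation Ob := (Ob C).
Local Notation Hom := (@Hom R C).

Definition IsIso (X Y : Ob) (f : Hom X Y) : Prop :=
  exists g : Hom Y X, comp g f = idm X /\ comp f g = idm Y.

Definition Iso (X Y : Ob) : Prop := exists f : Hom X Y, IsIso f.

Definition IsZero (X : Ob) : Prop := idm X = 0.

Definition HomZero (X Y : Ob) : Prop := forall f : Hom X Y, f = 0.

Definition IsBiprod2 (A B S : Ob) : Prop :=
  exists (i1 : Hom A S) (i2 : Hom B S) (p1 : Hom S A) (p2 : Hom S B),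
    [/\ comp p1 i1 = idm A, comp p2 i2 = idm B, comp p1 i2 = 0, comp p2 i1 = 0
      & comp i1 p1 + comp i2 p2 = idm S].

Definition IsBiprod (n : nat) (F : 'I_n -> Ob) (S : Ob) : Prop :=
  exists (ins : forall k, Hom (F k) S) (prs : forall k, Hom S (F k)),
    (forall k, comp (prs k) (ins k) = idm (F k)) /\
    (forall k l, k != l -> comp (prs l) (ins k) = 0) /\
    \sum_(k < n) comp (ins k) (prs k) = idm S.

Definition Indecomposable (X : Ob) : Prop :=
  ~ IsZero X /\ forall A B : Ob, IsBiprod2 A B X -> IsZero A \/ IsZero B.

Definition HomFinite : Prop :=
  forall X Y : Ob, exists (n : nat) (v : 'I_n -> Hom X Y),
    forall x : Hom X Y, exists c : 'I_n -> R, x = \sum_(k < n) c k *: v k.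

Record triangulated : Prop := {
  comp_assoc : forall (W X Y Z : Ob) (h : Hom Y Z) (g : Hom X Y) (f : Hom W X),
      comp h (comp g f) = comp (comp h g) f;
  comp_id_l : forall (X Y : Ob) (f : Hom X Y), comp (idm Y) f = f;
  comp_id_r : forall (X Y : Ob) (f : Hom X Y), comp f (idm X) = f;
  comp_linear_l : forall (X Y Z : Ob) (a : R) (g g' : Hom Y Z) (f : Hom X Y),
      comp (a *: g + g') f = a *: comp g f + comp g' f;
  comp_linear_r : forall (X Y Z : Ob) (a : R) (g : Hom Y Z) (f f' : Hom X Y),
      comp g (a *: f + f') = a *: comp g f + comp g f';
  zero_exists : exists Z : Ob, IsZero Z;
  biprod_exists : forall A B : Ob, exists S : Ob, IsBiprod2 A B S;
  shift_comp : forall (X Y Z : Ob) (g : Hom Y Z) (f : Hom X Y),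
      shiftH (comp g f) = comp (shiftH g) (shiftH f);
  shift_id : forall X : Ob, shiftH (idm X) = idm (shift X);
  shift_linear : forall (X Y : Ob) (a : R) (f f' : Hom X Y),
      shiftH (a *: f + f') = a *: shiftH f + shiftH f';
  shift_full : forall (X Y : Ob) (g : Hom (shift X) (shift Y)),
      exists f : Hom X Y, shiftH f = g;
  shift_faithful : forall (X Y : Ob) (f f' : Hom X Y), shiftH f = shiftH f' -> f = f';
  shift_esurj : forall Y : Ob, exists X : Ob, Iso (shift X) Y;
  TR1_iso : forall (X Y Z X' Y' Z' : Ob)
      (f : Hom X Y) (g : Hom Y Z) (h : Hom Z (shift X))
      (f' : Hom X' Y') (g' : Hom Y' Z') (h' : Hom Z' (shift X'))
      (a : Hom X X') (b : Hom Y Y') (c : Hom Z Z'),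
      IsIso a -> IsIso b -> IsIso c ->
      comp b f = comp f' a -> comp c g = comp g' b ->
      comp (shiftH a) h = comp h' c ->
      Dist f g h -> Dist f' g' h';
  TR1_id : forall (X Z : Ob), IsZero Z -> Dist (idm X) (0 : Hom X Z) (0 : Hom Z (shift X));
  TR1_cone : forall (X Y : Ob) (f : Hom X Y),
      exists (Z : Ob) (g : Hom Y Z) (h : Hom Z (shift X)), Dist f g h;
  TR2 : forall (X Y Z : Ob) (f : Hom X Y) (g : Hom Y Z) (h : Hom Z (shift X)),
      Dist f g h <-> Dist g h (- shiftH f);
  TR3 : forall (X Y Z X' Y' Z' : Ob)
      (f : Hom X Y) (g : Hom Y Z) (h : Hom Z (shift X))
      (f' : Hom X' Y') (g' : Hom Y' Z') (h' : Hom Z' (shift X'))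
      (a : Hom X X') (b : Hom Y Y'),
      Dist f g h -> Dist f' g' h' -> comp b f = comp f' a ->
      exists c : Hom Z Z', comp c g = comp g' b /\ comp (shiftH a) h = comp h' c;
  TR4 : forall (X Y Z Z' X' Y' : Ob) (u : Hom X Y) (v : Hom Y Z)
      (j : Hom Y Z') (k : Hom Z' (shift X))
      (l : Hom Z X') (i : Hom X' (shift Y))
      (m : Hom Z Y') (n : Hom Y' (shift X)),
      Dist u j k -> Dist v l i -> Dist (comp v u) m n ->
      exists (f : Hom Z' Y') (g : Hom Y' X'),
        [/\ Dist f g (comp (shiftH j) i), comp f j = comp m v,
            comp n f = k, comp g m = l & comp i g = comp (shiftH u) n]
}.

(* Filtrations.  For a class P of objects, a P-filtration of M of length n   *)
(* consists of distinguished triangles M_{k-1} -> M_k -> X_k -> M_{k-1}[1]   *)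
(* (k = 0..n) with M_{-1} = 0 = X_0, M_n = M and X_k in P for k >= 1.        *)
(* Indexing: fM k stands for M_{k-1}, fX k for X_k.                          *)
Record filtration (P : Ob -> Prop) (M : Ob) := Filtration {
  flen : nat;
  fM : nat -> Ob;
  fX : nat -> Ob;
  ff : forall k, Hom (fM k) (fM k.+1);
  fg : forall k, Hom (fM k.+1) (fX k);
  fh : forall k, Hom (fX k) (shift (fM k));
  f_dist : forall k, (k <= flen)%N -> Dist (ff k) (fg k) (fh k);
  f_M0 : IsZero (fM 0);
  f_Mn : fM flen.+1 = M;
  f_X0 : IsZero (fX 0);
  f_Xin : forall k, (0 < k <= flen)%N -> P (fX k)
}.

Definition inF (P : Ob -> Prop) (M : Ob) : Prop := inhabited (filtration P M).

Definition classOf (t : nat) (Theta : 'I_t -> Ob) (Y : Ob) : Prop :=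
  exists i : 'I_t, Y = Theta i.

Definition pb (P : Prop) : bool :=
  if excluded_middle_informative P then true else false.

Definition mult (t : nat) (Theta : 'I_t -> Ob) (M : Ob)
    (xi : filtration (classOf Theta) M) (i : 'I_t) : nat :=
  \sum_(k < (flen xi).+1) pb (Iso (fX xi k) (Theta i)).

Definition IsMinFiltLength (t : nat) (Theta : 'I_t -> Ob) (M : Ob) (n : nat)
    : Prop :=
  (exists xi : filtration (classOf Theta) M, flen xi = n) /\
  (forall xi : filtration (classOf Theta) M, (n <= flen xi)%N).

Definition linear_order (t : nat) (le : rel 'I_t) : Prop :=
  [/\ reflexive le, antisymmetric le, transitive le & total le].

Record ThetaProjSystem (t : nat) (le : rel 'I_t) (Theta Q : 'I_t -> Ob) : Prop := {
  tps_order : linear_order le;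
  tps_nonzero : forall i, ~ IsZero (Theta i);
  tps_hom : forall i j, le i j -> j != i -> HomZero (Theta j) (Theta i);
  tps_indec : forall i, Indecomposable (Q i);
  (* Q = (+)_i Q(i) with Hom(Q, Theta(j)[1]) = 0 = Hom(Q, Theta(j)[-1]) *)
  tps_sum : exists Qs : Ob, IsBiprod Q Qs /\
      (forall j, HomZero Qs (shift (Theta j))) /\
      (forall j (Y : Ob), Iso (shift Y) (Theta j) -> HomZero Qs Y);
  tps_tri : forall i, exists (K : Ob) (a : Hom K (Q i)) (b : Hom (Q i) (Theta i))
      (c : Hom (Theta i) (shift K)),
      [/\ Dist a b c,
          inF (fun Y => exists j, le i j /\ j != i /\ Y = Theta j) K
        & HomZero (shift K) (Theta i)]
}.

End Notions.

(* Part (a) is proved by induction on the set of indices occurring in two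
   Theta-filtrations of M.  Let m be the largest one.  The projective triangles
   give Hom(Theta(j), Theta(i)[1]) = 0 for i <= j, so every cone Theta(m) splits
   off in Hom(Theta(m), -), while cones Theta(j) with j < m are invisible to it:
   Hom(Theta(m), M) is the direct sum of [M : Theta(m)] copies of End(Theta(m)).
   As Hom-sets are finitely generated, Vasconcelos' theorem (a surjective
   endomorphism of a finitely generated module is injective) makes that number
   an invariant.  Moving the Theta(m)-factors to the bottom (octahedral axiom)
   yields a triangle A -> M -> B, with B filtered by the remaining factors and
   unique up to isomorphism; induction applies to B.  Part (b): for i < j,
   Hom(Q(j), Theta(i)) = 0, whereas Q(i) -> Theta(i) is non-zero. *)

From Pilot Require Import Defs.
From HB Require Import structures.
From mathcomp Require Import all_boot all_order all_algebra.
From Stdlib Require Import ClassicalEpsilon.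
Set Implicit Arguments. Unset Strict Implicit. Unset Printing Implicit Defensive.
Import Order.TTheory GRing.Theory Num.Theory.
Local Open Scope ring_scope.

Lemma seq_max_exists (T : eqType) (r : rel T) : reflexive r -> transitive r -> total r ->
  forall s : seq T, s != [::] -> exists2 m, m \in s & forall j, j \in s -> r j m.
Proof.
move=> refl_r trans_r total_r; elim=> [//|x s IH] _.
have [-> | /IH [m m_s s_m]] := eqVneq s [::].
  by exists x; rewrite ?inE ?eqxx // => j; rewrite inE => /eqP ->.
have [xm | mx] := orP (total_r x m).
  by exists m; rewrite ?inE ?m_s ?orbT // => j; rewrite inE => /orP [/eqP -> //|/s_m].
exists x; rewrite ?inE ?eqxx // => j; rewrite inE => /orP [/eqP -> //|/s_m jm].
exact: trans_r jm mx.
Qed.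

Lemma sum_count_mem (T : finType) (s : seq T) : (\sum_(i : T) count_mem i s)%N = size s.
Proof.
elim: s => [|x s IH] /=; first by rewrite big1.
rewrite big_split /= IH (bigD1 x) //= eqxx big1 // => i ne_ix.
by rewrite eq_sym (negbTE ne_ix).
Qed.

Lemma mem_rcons_l (T : eqType) (l : seq T) (j j' : T) : j' \in l -> j' \in rcons l j.
Proof. by rewrite mem_rcons inE => ->; rewrite orbT. Qed.

Lemma mem_rcons_r (T : eqType) (l : seq T) (j : T) : j \in rcons l j.
Proof. by rewrite mem_rcons inE eqxx. Qed.

Lemma pbT (P : Prop) : P -> pb P = true.
Proof. by rewrite /pb; case: excluded_middle_informative. Qed.

Lemma pbF (P : Prop) : ~ P -> pb P = false.
Proof. by rewrite /pb; case: excluded_middle_informative. Qed.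

Section LinearFun.
Variables (R : comPzRingType) (A B : lmodType R) (F : A -> B).
Hypothesis linF : linear F.

Let Fl : {linear A -> B} := HB.pack F (GRing.isLinear.Build R A B *:%R F linF).

Lemma linear_fun0 : F 0 = 0. Proof. exact: (linear0 Fl). Qed.
Lemma linear_funN x : F (- x) = - F x. Proof. exact: (linearN Fl). Qed.
Lemma linear_funD x y : F (x + y) = F x + F y. Proof. exact: (linearD Fl). Qed.
Lemma linear_funB x y : F (x - y) = F x - F y. Proof. exact: (linearB Fl). Qed.
Lemma linear_funZ a x : F (a *: x) = a *: F x. Proof. exact: (linearZ_LR Fl). Qed.
Lemma linear_fun_sum I r (P : pred I) (G : I -> A) :
  F (\sum_(i <- r | P i) G i) = \sum_(i <- r | P i) F (G i).
Proof. exact: (linear_sum Fl). Qed.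

Lemma linear_fun_inj : (forall x, F x = 0 -> x = 0) -> injective F.
Proof.
by move=> F0 x y Fxy; apply/eqP; rewrite -subr_eq0 (F0 (x - y)) // linear_funB Fxy subrr.
Qed.

Lemma linear_comp (D : lmodType R) (G : B -> D) : linear G -> linear (G \o F).
Proof. by move=> linG a x y /=; rewrite linF linG. Qed.

End LinearFun.

Lemma linear_sum_fun (R : comPzRingType) (A B : lmodType R) (n : nat)
    (F : 'I_n -> A -> B) :
  (forall k, linear (F k)) -> linear (fun x => \sum_(k < n) F k x).
Proof.
by move=> linF a x y; rewrite scaler_sumr -big_split; apply: eq_bigr => k _; apply: linF.
Qed.

Definition finitely_generated (R : comPzRingType) (N : lmodType R) : Prop :=
  exists (n : nat) (v : 'I_n -> N),
    forall x : N, exists c : 'I_n -> R, x = \sum_(k < n) c k *: v k.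

Section PolyAction.
Variables (R : comPzRingType) (N : lmodType R) (G : N -> N).
Hypotheses (linG : linear G) (nz1 : (1 : R) != 0).

(* [{poly _}] needs a nontrivial coefficient ring; the zero ring is handled
   directly in [surjective_endo_injective]. *)
Let R' : Type := R.
HB.instance Definition _ := GRing.ComPzRing.on R'.
HB.instance Definition _ := GRing.PzSemiRing_isNonZero.Build R' nz1.

Definition pact (p : {poly R'}) (x : N) : N := \sum_(i < size p) (p`_i : R) *: iter i G x.

Lemma linear_iter i : linear (iter i G).
Proof. by elim: i => [|i IH] a x y //=; rewrite IH linG. Qed.

Lemma pact_widen (p : {poly R'}) (m : nat) x : (size p <= m)%N ->
  pact p x = \sum_(i < m) (p`_i : R) *: iter i G x.
Proof.
move=> le_p_m; rewrite /pact (big_ord_widen m (fun i => (p`_i : R) *: iter i G x) le_p_m).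
rewrite big_mkcond; apply: eq_bigr => i _; case: ifP => // /negbT.
by rewrite -leqNgt => le_p_i; rewrite nth_default // scale0r.
Qed.

Lemma pact0 x : pact 0 x = 0.
Proof. by rewrite /pact size_poly0 big_ord0. Qed.

Lemma pactD p q x : pact (p + q) x = pact p x + pact q x.
Proof.
set m := maxn (size p) (size q).
rewrite (pact_widen (m := m)) ?(leq_trans (size_polyD _ _)) //.
rewrite (pact_widen (p := p) (m := m)) ?leq_maxl // (pact_widen (p := q) (m := m)) ?leq_maxr //.
by rewrite -big_split; apply: eq_bigr => i _; rewrite coefD scalerDl.
Qed.

Lemma pactZ (c : R') p x : pact (c *: p) x = (c : R) *: pact p x.
Proof.
rewrite (pact_widen (m := size p)) ?size_scale_leq // /pact scaler_sumr.
by apply: eq_bigr => i _; rewrite coefZ scalerA.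
Qed.

Lemma pactN p x : pact (- p) x = - pact p x.
Proof. by rewrite -(scaleN1r p) pactZ scaleN1r. Qed.

Lemma pactC (c : R') x : pact c%:P x = (c : R) *: x.
Proof. by rewrite (pact_widen (m := 1)) ?size_polyC_leq1 // big_ord1 coefC. Qed.

Lemma pactMX p x : pact (p * 'X) x = pact p (G x).
Proof.
rewrite (pact_widen (m := (size p).+1)); last first.
  by rewrite (leq_trans (size_polyMleq _ _)) // size_polyX addn2.
rewrite big_ord_recl coefMX /= scale0r add0r /pact.
by apply: eq_bigr => i _; rewrite coefMX /= add0n -iterS iterSr.
Qed.

Lemma G_pact p x : G (pact p x) = pact p (G x).
Proof.
rewrite /pact (linear_fun_sum linG); apply: eq_bigr => i _.
by rewrite (linear_funZ linG) -iterS iterSr.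
Qed.

Lemma pactM p q x : pact (p * q) x = pact p (pact q x).
Proof.
elim/poly_ind: p x => [|p c IH] x; first by rewrite mul0r !pact0.
by rewrite mulrDl mulrAC mul_polyC pactD pactMX pactZ IH pactD pactMX pactC G_pact.
Qed.

Lemma linear_pact p : linear (pact p).
Proof.
move=> a x y; rewrite /pact scaler_sumr -big_split; apply: eq_bigr => i _.
by rewrite linear_iter scalerDr !scalerA mulrC.
Qed.

Lemma pact_sum I (r : seq I) (P : pred I) (F : I -> {poly R'}) x :
  pact (\sum_(i <- r | P i) F i) x = \sum_(i <- r | P i) pact (F i) x.
Proof. by apply: (big_morph (pact^~ x)) => [p q|]; rewrite ?pactD ?pact0. Qed.

Lemma pact_kerG p x : G x = 0 -> pact p x = (p`_0 : R) *: x.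
Proof.
move=> Gx0; rewrite (pact_widen (m := (size p).+1)) // big_ord_recl /=.
rewrite big1 ?addr0 // => i _; rewrite add0n -iterS iterSr Gx0.
by rewrite (linear_fun0 (linear_iter _)) scaler0.
Qed.

(* The determinant trick: writing the generators as [v = C (G v)] for a matrix
   [C] over R, the polynomial [det (1 - X C)] annihilates N. *)
Lemma surjective_annihilating_poly : finitely_generated N ->
  (forall y, exists x, y = G x) ->
  exists2 p : {poly R'}, p`_0 = 1 & forall y, pact p y = 0.
Proof.
move=> [n [v span]] surj.
have [w Gw] : exists w : 'I_n -> N, forall i, v i = G (w i).
  exact: (@fin_all_exists _ (fun _ => N) (fun i u => v i = G u)).
have [c wc] : exists c : 'I_n -> 'I_n -> R, forall i, w i = \sum_(k < n) c i k *: v k.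
  exact: (@fin_all_exists _ (fun _ => 'I_n -> R) (fun i u => w i = \sum_(k < n) u k *: v k)).
pose A : 'M[{poly R'}]_n := \matrix_(i, j) (((i == j)%:R : R')%:P - (c i j : R')%:P * 'X).
have Av0 i : \sum_(j < n) pact (A i j) (v j) = 0.
  under eq_bigr => j _ do rewrite mxE pactD pactN pactMX !pactC.
  rewrite big_split /= sumrN (bigD1 i) //= eqxx scale1r big1 ?addr0; last first.
    by move=> j /negbTE; rewrite eq_sym => ->; rewrite scale0r.
  rewrite Gw wc (linear_fun_sum linG) -sumrB big1 // => j _.
  by rewrite (linear_funZ linG) subrr.
have detAv0 k : pact (\det A) (v k) = 0.
  have <- : \sum_(j < n) pact (((\det A)%:M : 'M_n) k j) (v j) = pact (\det A) (v k).
    rewrite (bigD1 k) //= mxE eqxx mulr1n big1 ?addr0 // => j /negbTE.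
    by rewrite mxE eq_sym => ->; rewrite mulr0n pact0.
  rewrite -(mul_adj_mx A); under eq_bigr => j _ do rewrite mxE pact_sum.
  rewrite exchange_big /= big1 // => i _; under eq_bigr => j _ do rewrite pactM.
  by rewrite -(linear_fun_sum (linear_pact _)) Av0 (linear_fun0 (linear_pact _)).
exists (\det A).
  rewrite -horner_coef0 -horner_evalE -det_map_mx.
  have -> : map_mx (horner_eval (0 : R')) A = 1%:M.
    apply/matrixP => i j; rewrite !mxE horner_evalE.
    by rewrite hornerD hornerN hornerM hornerX mulr0 subr0 hornerC.
  by rewrite det1.
move=> y; have [d ->] := span y.
rewrite (linear_fun_sum (linear_pact _)) big1 // => k _.
by rewrite (linear_funZ (linear_pact _)) detAv0 scaler0.
Qed.

End PolyAction.

Lemma surjective_endo_injective (R : comPzRingType) (N : lmodType R) (G : N -> N) :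
  linear G -> finitely_generated N -> (forall y, exists x, y = G x) ->
  forall x, G x = 0 -> x = 0.
Proof.
move=> linG fgN surj x Gx0; have [R0|nz1] := eqVneq (1 : R) 0.
  by rewrite -[x]scale1r R0 scale0r.
have [p p0 annp] := surjective_annihilating_poly linG nz1 fgN surj.
by have := annp x; rewrite pact_kerG // p0 scale1r.
Qed.

Section IsoPow.
Variable R : comPzRingType.
Implicit Types N E : lmodType R.

Definition iso_pow N E (n : nat) : Prop :=
  exists (io : 'I_n -> E -> N) (pr : 'I_n -> N -> E),
  [/\ forall k, linear (io k), forall k, linear (pr k),
      forall k k' e, pr k' (io k e) = (if k == k' then e else 0)
    & forall y, y = \sum_(k < n) io k (pr k y)].

Lemma iso_pow0 N E : (forall y : N, y = 0) -> iso_pow N E 0.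
Proof.
move=> N0; exists (fun _ _ => 0), (fun _ _ => 0); split.
- by move=> k a x y; rewrite scaler0 addr0.
- by move=> k a x y; rewrite scaler0 addr0.
- by case.
- by move=> y; rewrite big_ord0; apply: N0.
Qed.

Lemma linear_bij_inverse N0 N1 (F : N0 -> N1) :
  linear F -> (forall x, F x = 0 -> x = 0) -> (forall y, exists x, y = F x) ->
  exists2 F' : N1 -> N0, linear F' & cancel F' F /\ cancel F F'.
Proof.
move=> linF F0 surjF; have Finj := linear_fun_inj linF F0.
pose F' y := proj1_sig (constructive_indefinite_description _ (surjF y)).
have F'K : cancel F' F by move=> y; rewrite /F'; case: constructive_indefinite_description.
exists F'; last by split=> // x; apply: Finj; rewrite F'K.
by move=> a x y; apply: Finj; rewrite linF !F'K.
Qed.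

Lemma iso_pow_transport N0 N1 E n (F : N0 -> N1) :
  iso_pow N0 E n -> linear F -> (forall x, F x = 0 -> x = 0) ->
  (forall y, exists x, y = F x) -> iso_pow N1 E n.
Proof.
move=> [io [pr [linio linpr prio sum_iopr]]] linF F0 surjF.
have [F' linF' [F'K FK]] := linear_bij_inverse linF F0 surjF.
exists (fun k => F \o io k), (fun k => pr k \o F'); split.
- by move=> k; apply: linear_comp.
- by move=> k; apply: linear_comp.
- by move=> k k' e /=; rewrite FK prio.
- by move=> y; rewrite -(linear_fun_sum linF) -sum_iopr F'K.
Qed.

Lemma widen_ord_lift_max n (k : 'I_n) : widen_ord (leqnSn n) k = lift ord_max k.
Proof. by apply: val_inj; rewrite /= /bump leqNgt ltn_ord. Qed.

(* A split short exact sequence [0 -> N0 -> N1 -> E -> 0] adds one copy of [E]. *)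
Lemma iso_powS N0 N1 E n (F : N0 -> N1) (S : E -> N1) (P : N1 -> E) :
  iso_pow N0 E n -> linear F -> linear S -> linear P ->
  (forall x, F x = 0 -> x = 0) -> (forall x, P (F x) = 0) ->
  cancel S P -> (forall y, exists x, y - S (P y) = F x) ->
  iso_pow N1 E n.+1.
Proof.
move=> [io [pr [linio linpr prio sum_iopr]]] linF linS linP F0 PF0 SK surjF.
have Finj := linear_fun_inj linF F0.
pose r y := proj1_sig (constructive_indefinite_description _ (surjF y)).
have rE y : F (r y) = y - S (P y).
  by rewrite /r; case: constructive_indefinite_description.
have linr : linear r.
  by move=> a x y; apply: Finj; rewrite linF !rE linP linS scalerBr addrACA opprD.
have rF x : r (F x) = x by apply: Finj; rewrite rE PF0 (linear_fun0 linS) subr0.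
have rS e : r (S e) = 0 by apply: F0; rewrite rE SK subrr.
pose io' (k : 'I_n.+1) : E -> N1 :=
  if unlift ord_max k is Some k0 then F \o io k0 else S.
pose pr' (k : 'I_n.+1) : N1 -> E :=
  if unlift ord_max k is Some k0 then pr k0 \o r else P.
exists io', pr'; split.
- by move=> k; rewrite /io'; case: unlift => [k0|] //; apply: linear_comp.
- by move=> k; rewrite /pr'; case: unlift => [k0|] //; apply: linear_comp.
- move=> k k' e; rewrite /io' /pr'.
  case: (unliftP ord_max k) => [k0 ->|->]; case: (unliftP ord_max k') => [k0' ->|->] /=.
  + by rewrite rF prio (inj_eq lift_inj).
  + by rewrite PF0 eq_sym (negbTE (neq_lift _ _)).
  + by rewrite rS (linear_fun0 (linpr k0')) (negbTE (neq_lift _ _)).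
  + by rewrite SK eqxx.
- move=> y; rewrite big_ord_recr /= {2}/io' {2}/pr' unlift_none.
  under eq_bigr => k _ do rewrite widen_ord_lift_max /io' /pr' liftK.
  by rewrite -(linear_fun_sum linF) -sum_iopr rE subrK.
Qed.

(* Collapsing [E^a] onto its first [b] coordinates and reading the result back
   through [N ~ E^b] gives a surjective endomorphism of [N]; if [b < a] it kills
   the copy of [E] with index [b], which Vasconcelos forbids. *)
Lemma iso_pow_leq N E (a b : nat) (e : E) : finitely_generated N -> e != 0 ->
  iso_pow N E a -> iso_pow N E b -> (a <= b)%N.
Proof.
move=> fgN nz_e [io [pr [linio linpr prio sum_iopr]]] [io' [pr' [linio' _ _ sum_iopr']]].
rewrite leqNgt; apply/negP => lt_ba.
pose w (l : 'I_b) : 'I_a := widen_ord (ltnW lt_ba) l.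
have w_eq l l' : (w l' == w l) = (l' == l) by rewrite -val_eqE.
pose G y := \sum_(l < b) io' l (pr (w l) y).
have linG : linear G by apply: linear_sum_fun => l; apply: linear_comp.
have surjG y : exists x, y = G x.
  exists (\sum_(l < b) io (w l) (pr' l y)); rewrite /G {1}(sum_iopr' y).
  apply: eq_bigr => l _; congr (io' l _).
  rewrite (linear_fun_sum (linpr _)) (bigD1 l) //= prio eqxx big1 ?addr0 // => l' ne_l'l.
  by rewrite prio w_eq (negbTE ne_l'l).
pose extra : 'I_a := Ordinal lt_ba.
have Gextra : G (io extra e) = 0.
  rewrite /G big1 // => l _; rewrite prio -val_eqE /= eq_sym ltn_eqF //.
  exact: (linear_fun0 (linio' l)).
move: (prio extra extra e); rewrite eqxx (surjective_endo_injective linG fgN surjG Gextra).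
by rewrite (linear_fun0 (linpr _)) => e0; rewrite -e0 eqxx in nz_e.
Qed.

Lemma iso_pow_uniq N E (a b : nat) (e : E) : finitely_generated N -> e != 0 ->
  iso_pow N E a -> iso_pow N E b -> a = b.
Proof.
by move=> fgN nz_e Na Nb; apply/anti_leq; rewrite !(iso_pow_leq fgN nz_e).
Qed.

End IsoPow.

Section Triangulated.
Variables (R : comPzRingType) (C : triData R).
Hypothesis HC : triangulated C.
Local Notation Ob := (Ob C).
Local Notation Hom := (@Defs.Hom R C).
Local Notation comp := Defs.comp.
Local Notation comp_assoc := (Defs.comp_assoc HC).
Local Notation comp_id_l := (Defs.comp_id_l HC).
Local Notation comp_id_r := (Defs.comp_id_r HC).
Local Notation shift_comp := (Defs.shift_comp HC).
Local Notation shift_id := (Defs.shift_id HC).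
Local Notation shift_full := (Defs.shift_full HC).
Local Notation shift_faithful := (Defs.shift_faithful HC).
Local Notation shift_esurj := (Defs.shift_esurj HC).
Local Notation zero_exists := (Defs.zero_exists HC).
Local Notation TR1_iso := (Defs.TR1_iso HC).
Local Notation TR1_id := (Defs.TR1_id HC).
Local Notation TR1_cone := (Defs.TR1_cone HC).
Local Notation TR2 := (Defs.TR2 HC).
Local Notation TR3 := (Defs.TR3 HC).
Local Notation TR4 := (Defs.TR4 HC).

Lemma linear_comp_l (X Y Z : Ob) (f : Hom X Y) : linear (fun g : Hom Y Z => comp g f).
Proof. by move=> a g g'; apply: (comp_linear_l HC). Qed.

Lemma linear_comp_r (X Y Z : Ob) (g : Hom Y Z) : linear (fun f : Hom X Y => comp g f).
Proof. by move=> a f f'; apply: (comp_linear_r HC). Qed.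

Lemma linear_shiftH (X Y : Ob) : linear (@shiftH R C X Y).
Proof. by move=> a f f'; apply: (shift_linear HC). Qed.

Section Additivity.
Variables X Y Z : Ob.

Lemma comp0l (f : Hom X Y) : comp (0 : Hom Y Z) f = 0.
Proof. exact: linear_fun0 (linear_comp_l f). Qed.
Lemma comp0r (g : Hom Y Z) : comp g (0 : Hom X Y) = 0.
Proof. exact: linear_fun0 (linear_comp_r g). Qed.
Lemma compDl (g g' : Hom Y Z) (f : Hom X Y) : comp (g + g') f = comp g f + comp g' f.
Proof. exact: linear_funD (linear_comp_l f) g g'. Qed.
Lemma compDr (g : Hom Y Z) (f f' : Hom X Y) : comp g (f + f') = comp g f + comp g f'.
Proof. exact: linear_funD (linear_comp_r g) f f'. Qed.
Lemma compNl (g : Hom Y Z) (f : Hom X Y) : comp (- g) f = - comp g f.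
Proof. exact: linear_funN (linear_comp_l f) g. Qed.
Lemma compNr (g : Hom Y Z) (f : Hom X Y) : comp g (- f) = - comp g f.
Proof. exact: linear_funN (linear_comp_r g) f. Qed.
Lemma compBl (g g' : Hom Y Z) (f : Hom X Y) : comp (g - g') f = comp g f - comp g' f.
Proof. exact: linear_funB (linear_comp_l f) g g'. Qed.
Lemma compBr (g : Hom Y Z) (f f' : Hom X Y) : comp g (f - f') = comp g f - comp g f'.
Proof. exact: linear_funB (linear_comp_r g) f f'. Qed.

Lemma shiftH0 : shiftH (0 : Hom X Y) = 0.
Proof. exact: linear_fun0 (@linear_shiftH X Y). Qed.
Lemma shiftHN (f : Hom X Y) : shiftH (- f) = - shiftH f.
Proof. exact: linear_funN (@linear_shiftH X Y) f. Qed.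
Lemma shiftH_eq0 (f : Hom X Y) : shiftH f = 0 -> f = 0.
Proof. by rewrite -shiftH0 => /shift_faithful. Qed.

End Additivity.

Lemma hom_from_zero (X Y : Ob) : IsZero X -> forall f : Hom X Y, f = 0.
Proof. by move=> X0 f; rewrite -(comp_id_r f) X0 comp0r. Qed.
Lemma hom_to_zero (X Y : Ob) : IsZero Y -> forall f : Hom X Y, f = 0.
Proof. by move=> Y0 f; rewrite -(comp_id_l f) Y0 comp0l. Qed.
Lemma IsZero_shift (X : Ob) : IsZero X -> IsZero (shift X).
Proof. by rewrite /IsZero -shift_id => ->; rewrite shiftH0. Qed.

Lemma IsIso_id (X : Ob) : IsIso (idm X).
Proof. by exists (idm X); rewrite comp_id_l. Qed.
Lemma Iso_refl (X : Ob) : Iso X X.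
Proof. by exists (idm X); apply: IsIso_id. Qed.
Lemma Iso_sym (X Y : Ob) : Iso X Y -> Iso Y X.
Proof. by case=> f [g [gf fg]]; exists g, f. Qed.
Lemma Iso_zero (X Y : Ob) : Iso X Y -> IsZero X -> IsZero Y.
Proof. by case=> f [g [_ fg]] X0; rewrite /IsZero -fg (hom_from_zero X0 f) comp0l. Qed.

Lemma Dist_rot (X Y Z : Ob) (f : Hom X Y) (g : Hom Y Z) (h : Hom Z (shift X)) :
  Dist f g h -> Dist g h (- shiftH f).
Proof. exact: (TR2 _ _ _).1. Qed.

Lemma Dist_zero_cone (X Z : Ob) : IsZero Z -> Dist (idm X) (0 : Hom X Z) 0.
Proof. exact: TR1_id. Qed.

Lemma Dist_zero_fiber (X W : Ob) : IsZero X -> Dist (0 : Hom X W) (idm W) 0.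
Proof.
by move=> X0; apply/TR2; rewrite shiftH0 oppr0; apply/Dist_zero_cone/IsZero_shift.
Qed.

Section Triangles.
Variables (X Y Z : Ob) (f : Hom X Y) (g : Hom Y Z) (h : Hom Z (shift X)).
Hypothesis Dfgh : Dist f g h.

Lemma Dist_comp0 : comp g f = 0.
Proof.
have [Z0 Z0_0] := zero_exists.
have [c [cg _]] := TR3 (Dist_zero_cone X Z0_0) Dfgh (a := idm X) (b := f) erefl.
by rewrite comp0r in cg.
Qed.

Lemma Dist_lift (W : Ob) (w : Hom W Y) : comp g w = 0 -> exists v : Hom W X, w = comp f v.
Proof.
move=> gw0; have [Z0 Z0_0] := zero_exists.
have sq : comp (0 : Hom Z0 Z) (0 : Hom W Z0) = comp g w by rewrite comp0r gw0.
have [c [_ cE]] := TR3 (Dist_rot (Dist_zero_cone W Z0_0)) (Dist_rot Dfgh) sq.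
move: cE; rewrite compNr compNl shift_id comp_id_r => /oppr_inj cE.
have [v vE] := shift_full c; exists v; apply: shift_faithful.
by rewrite shift_comp vE.
Qed.

Lemma Dist_extend (W : Ob) (x : Hom Y W) : comp x f = 0 -> exists z : Hom Z W, x = comp z g.
Proof.
move=> xf0; have [Z0 Z0_0] := zero_exists.
have sq : comp x f = comp (0 : Hom Z0 W) (0 : Hom X Z0) by rewrite comp0r xf0.
have [c [cg _]] := TR3 Dfgh (Dist_zero_fiber W Z0_0) sq.
by exists c; rewrite cg comp_id_l.
Qed.

End Triangles.

Lemma Dist_comp_inj (X Y Z W : Ob) (f : Hom X Y) (g : Hom Y Z) (h : Hom Z (shift X))
    (y : Hom W X) :
  Dist f g h -> (forall u : Hom (shift W) Z, u = 0) -> comp f y = 0 -> y = 0.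
Proof.
move=> Dfgh WZ0 fy0.
have : comp (- shiftH f) (shiftH y) = 0.
  by rewrite compNl -shift_comp fy0 shiftH0 oppr0.
case/(Dist_lift (Dist_rot (Dist_rot Dfgh))) => v vE.
by apply: shiftH_eq0; rewrite vE (WZ0 v) comp0r.
Qed.

Lemma Dist_fiber (Y Z : Ob) (q : Hom Y Z) :
  exists (X : Ob) (f : Hom X Y) (h : Hom Z (shift X)), Dist f q h.
Proof.
have [Z1 [g1 [h1 D1]]] := TR1_cone q.
have [X [al [be [beal albe]]]] := shift_esurj Z1.
have [f0 f0E] := shift_full (comp h1 al).
exists X, (- f0), (comp be g1); apply/TR2; rewrite shiftHN f0E opprK.
apply: (TR1_iso (a := idm Y) (b := idm Z) (c := be) _ _ _ _ _ _ D1).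
- exact: IsIso_id.
- exact: IsIso_id.
- by exists al.
- by rewrite comp_id_l comp_id_r.
- by rewrite comp_id_r.
- by rewrite shift_id comp_id_l -comp_assoc albe comp_id_r.
Qed.

(* [e - 1] kills [g] and is killed by [h], so it factors through [h] and
   squares to zero: [e = 1 + (e - 1)] is unipotent. *)
Lemma Dist_cone_endo_unit (X Y Z : Ob) (f : Hom X Y) (g : Hom Y Z) (h : Hom Z (shift X))
    (e : Hom Z Z) :
  Dist f g h -> comp e g = g -> comp h e = h -> IsIso e.
Proof.
move=> Dfgh eg he; pose x := e - idm Z.
have xg0 : comp x g = 0 by rewrite compBl eg comp_id_l subrr.
have hx0 : comp h x = 0 by rewrite compBr he comp_id_r subrr.
have [y yE] := Dist_extend (Dist_rot Dfgh) xg0.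
have xx0 : comp x x = 0 by rewrite {1}yE -comp_assoc hx0 comp0r.
have eE : e = idm Z + x by rewrite addrC subrK.
clearbody x; exists (idm Z - x); rewrite eE compBl compBr !compDr !compDl !comp_id_l comp_id_r.
by rewrite xx0 addr0 addrK.
Qed.

Lemma Dist_cone_unique (X Y Z Z' : Ob) (f : Hom X Y) (g : Hom Y Z) (h : Hom Z (shift X))
    (g' : Hom Y Z') (h' : Hom Z' (shift X)) :
  Dist f g h -> Dist f g' h' -> Iso Z Z'.
Proof.
move=> D D'.
have sq : comp (idm Y) f = comp f (idm X) by rewrite comp_id_l comp_id_r.
have [c [cg hc]] := TR3 D D' sq; have [d [dg hd]] := TR3 D' D sq.
rewrite comp_id_r in cg; rewrite comp_id_r in dg.
rewrite shift_id comp_id_l in hc; rewrite shift_id comp_id_l in hd.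
have [l [lE _]] : IsIso (comp d c).
  apply: (Dist_cone_endo_unit D); first by rewrite -comp_assoc cg dg.
  by rewrite comp_assoc -hd -hc.
have [r [_ rE]] : IsIso (comp c d).
  apply: (Dist_cone_endo_unit D'); first by rewrite -comp_assoc dg cg.
  by rewrite comp_assoc -hc -hd.
have ldcd : comp (comp l d) (comp c d) = d.
  by rewrite comp_assoc -(comp_assoc l) lE comp_id_l.
have lr : comp l d = comp d r.
  by rewrite -[LHS]comp_id_r -rE comp_assoc ldcd.
exists c, (comp l d); split; first by rewrite -comp_assoc.
by rewrite lr comp_assoc.
Qed.

Section ThetaProjective.
Variables (t : nat) (le : rel 'I_t) (Theta Q : 'I_t -> Ob).
Hypothesis HS : ThetaProjSystem le Theta Q.

(* [l] lists the indices of the successive cones, bottom first. *)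
Inductive filtered : Ob -> seq 'I_t -> Prop :=
| filtered_nil (Z : Ob) : IsZero Z -> filtered Z [::]
| filtered_rcons (M0 M1 : Ob) (l : seq 'I_t) (j : 'I_t) (f : Hom M0 M1)
    (g : Hom M1 (Theta j)) (h : Hom (Theta j) (shift M0)) :
    filtered M0 l -> Dist f g h -> filtered M1 (rcons l j).

Lemma filtered_iso (M M' : Ob) (l : seq 'I_t) : filtered M l -> Iso M M' -> filtered M' l.
Proof.
case=> [Z Z0|M0 M1 l' j f g h FM0 D] isoM; first exact/filtered_nil/(Iso_zero isoM).
case: isoM => al [be [beal albe]].
apply: (filtered_rcons (f := comp al f) (g := comp g be) (h := h) FM0).
apply: (TR1_iso (a := idm M0) (b := al) (c := idm (Theta j)) _ _ _ _ _ _ D).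
- exact: IsIso_id.
- by exists be.
- exact: IsIso_id.
- by rewrite comp_id_r.
- by rewrite comp_id_l -comp_assoc beal comp_id_r.
- by rewrite shift_id comp_id_l comp_id_r.
Qed.

Section HomVanishing.
Variable W : Ob.

Lemma hom_into_filtered0 (M : Ob) (l : seq 'I_t) : filtered M l ->
  (forall j, j \in l -> forall u : Hom W (Theta j), u = 0) -> forall u : Hom W M, u = 0.
Proof.
elim=> [Z Z0|M0 M1 l' j f g h _ IH D] Wl0 u; first exact: hom_to_zero.
have [v ->] := Dist_lift D (Wl0 j (mem_rcons_r _ _) (comp g u)).
by rewrite (IH _ v) ?comp0r // => j' j'l; apply/Wl0/mem_rcons_l.
Qed.

Lemma hom_from_filtered0 (M : Ob) (l : seq 'I_t) : filtered M l ->
  (forall j, j \in l -> forall u : Hom (Theta j) W, u = 0) -> forall u : Hom M W, u = 0.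
Proof.
elim=> [Z Z0|M0 M1 l' j f g h _ IH D] lW0 u; first exact: hom_from_zero.
have [z ->] := Dist_extend D (IH (fun j' j'l => lW0 j' (mem_rcons_l j j'l)) (comp u f)).
by rewrite (lW0 j (mem_rcons_r _ _) z) comp0l.
Qed.

Lemma hom_into_shift_filtered0 (M : Ob) (l : seq 'I_t) : filtered M l ->
  (forall j, j \in l -> forall u : Hom W (shift (Theta j)), u = 0) ->
  forall u : Hom W (shift M), u = 0.
Proof.
elim=> [Z Z0|M0 M1 l' j f g h _ IH D] Wl0 u; first exact/hom_to_zero/IsZero_shift.
have D3 := Dist_rot (Dist_rot (Dist_rot D)).
have [v ->] := Dist_lift D3 (Wl0 j (mem_rcons_r _ _) (comp (- shiftH g) u)).
by rewrite (IH _ v) ?comp0r // => j' j'l; apply/Wl0/mem_rcons_l.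
Qed.

End HomVanishing.

Lemma tps_le_refl : reflexive le. Proof. by case: (tps_order HS). Qed.
Lemma tps_le_anti : antisymmetric le. Proof. by case: (tps_order HS). Qed.
Lemma tps_le_trans : transitive le. Proof. by case: (tps_order HS). Qed.
Lemma tps_le_total : total le. Proof. by case: (tps_order HS). Qed.

Lemma Theta_hom0 (i j : 'I_t) : le i j -> j != i -> forall u : Hom (Theta j) (Theta i), u = 0.
Proof. exact: (tps_hom HS). Qed.

Lemma Theta_iso_eq (i j : 'I_t) : Iso (Theta j) (Theta i) -> j = i.
Proof.
case=> f [g [gf fg]]; case: (eqVneq j i) => // ne_ji; exfalso.
case/orP: (tps_le_total i j) => [le_ij|le_ji].
  by apply: (tps_nonzero HS (i := i)); rewrite /IsZero -fg (Theta_hom0 le_ij ne_ji f) comp0l.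
apply: (tps_nonzero HS (i := j)).
by rewrite /IsZero -gf (Theta_hom0 le_ji _ g) ?comp0l // eq_sym.
Qed.

Lemma Q_hom_shift_Theta0 (i j : 'I_t) (u : Hom (Q i) (shift (Theta j))) : u = 0.
Proof.
have [Qs [[ins [prs [prin _]]] [QsTheta0 _]]] := tps_sum HS.
by rewrite -(comp_id_r u) -(prin i) comp_assoc (QsTheta0 j (comp u (prs i))) comp0l.
Qed.

Lemma shift_Q_hom_Theta0 (i j : 'I_t) (u : Hom (shift (Q i)) (Theta j)) : u = 0.
Proof.
have [Qs [[ins [prs [prin _]]] [_ QsTheta0]]] := tps_sum HS.
have [Y [f [g [gf fg]]]] := shift_esurj (Theta j).
have [v vE] := shift_full (comp g u).
have v0 : v = 0.
  rewrite -(comp_id_r v) -(prin i) comp_assoc.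
  by rewrite (QsTheta0 j Y (ex_intro _ f (ex_intro _ g (conj gf fg))) (comp v (prs i))) comp0l.
by rewrite -(comp_id_l u) -fg -comp_assoc -vE v0 shiftH0 comp0r.
Qed.

Lemma filtration_filtered (P : Ob -> Prop) (S : 'I_t -> Prop)
    (PS : forall Y, P Y -> exists2 j, S j & Y = Theta j) (M : Ob) (xi : filtration P M) :
  exists l, [/\ filtered M l, forall j, j \in l -> S j, size l = flen xi &
    forall i, (\sum_(k < (flen xi).+1) pb (Iso (fX xi k) (Theta i)))%N = count (pred1 i) l].
Proof.
suff prefix k : (k <= flen xi)%N -> exists l, [/\ filtered (fM xi k.+1) l,
    forall j, j \in l -> S j, size l = k &
    forall i, (\sum_(k' < k.+1) pb (Iso (fX xi k') (Theta i)))%N = count (pred1 i) l].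
  by have := prefix _ (leqnn _); rewrite (f_Mn xi).
elim: k => [_|k IH lt_k].
  exists [::]; split=> // [|i].
    have [v vE] := Dist_lift (f_dist (leq0n _)) (hom_to_zero (f_X0 xi) (comp (fg xi 0) (idm _))).
    by apply: filtered_nil; rewrite /IsZero vE (hom_from_zero (f_M0 xi) (ff xi 0)) comp0l.
  rewrite big_ord1 pbF // => isoX0.
  by case: (tps_nonzero HS (i := i)); apply: (Iso_zero isoX0 (f_X0 xi)).
have [l [Fl lS size_l count_l]] := IH (ltnW lt_k).
have [j Sj XE] := PS _ (f_Xin (f := xi) (k := k.+1) lt_k).
move: (fg xi k.+1) (fh xi k.+1) (f_dist lt_k); rewrite XE => g h D.
exists (rcons l j); split.
- exact: filtered_rcons Fl D.
- by move=> j'; rewrite mem_rcons inE => /orP [/eqP -> //|]; apply: lS.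
- by rewrite size_rcons size_l.
- move=> i; rewrite big_ord_recr /= count_l -cats1 count_cat /= addn0 XE.
  have [-> | ne_ji] := eqVneq j i; first by rewrite pbT //; apply: Iso_refl.
  by rewrite pbF // => /Theta_iso_eq eq_ji; rewrite eq_ji eqxx in ne_ji.
Qed.

Lemma hom_above_Theta0 (i j : 'I_t) (K : Ob) : le i j ->
  inF (fun Y => exists l, le j l /\ l != j /\ Y = Theta l) K ->
  forall w : Hom K (Theta i), w = 0.
Proof.
move=> le_ij [xi].
have PS Y : (exists l, le j l /\ l != j /\ Y = Theta l) ->
    exists2 l, le j l /\ l != j & Y = Theta l.
  by case=> l [jl [lj ->]]; exists l.
have [l [Fl labove _ _]] := filtration_filtered PS xi.
apply: (hom_from_filtered0 Fl) => l' /labove [le_jl' ne_l'j]; apply: Theta_hom0.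
  exact: tps_le_trans le_ij le_jl'.
apply: contraNneq ne_l'j => l'i; apply/eqP/tps_le_anti.
by rewrite andbC le_jl' l'i le_ij.
Qed.

Lemma Theta_ext0 (i j : 'I_t) : le i j -> forall u : Hom (Theta j) (shift (Theta i)), u = 0.
Proof.
move=> le_ij u; have [K [a [b [c [D FK _]]]]] := tps_tri HS j.
have [z ->] := Dist_extend (Dist_rot D) (Q_hom_shift_Theta0 (comp u b)).
have [w <-] := shift_full z.
by rewrite (hom_above_Theta0 le_ij FK w) shiftH0 comp0l.
Qed.

Lemma shift_Q_hom_filtered0 (m : 'I_t) (Z : Ob) (l : seq 'I_t) :
  filtered Z l -> forall u : Hom (shift (Q m)) Z, u = 0.
Proof. by move=> FZ; apply: (hom_into_filtered0 FZ) => j _; apply: shift_Q_hom_Theta0. Qed.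

Section BelowTop.
Variable m : 'I_t.
Implicit Types l : seq 'I_t.
Local Notation below l := (forall j, j \in l -> le j m).

Lemma below_rcons l j : below (rcons l j) -> below l /\ le j m.
Proof. by move=> lm; split=> [j' /(mem_rcons_l j)|]; apply: lm; rewrite mem_rcons_r. Qed.

Lemma Theta_hom_precomp_inj (K : Ob) (a : Hom K (Q m)) (b : Hom (Q m) (Theta m))
    (c : Hom (Theta m) (shift K)) (Y : Ob) l :
  Dist a b c -> HomZero (shift K) (Theta m) -> filtered Y l -> below l ->
  forall x : Hom (Theta m) Y, comp x b = 0 -> x = 0.
Proof.
move=> D K0 FY; elim: FY => [Z Z0 _ x _|M0 M1 l' j f g h _ IH Dfgh].
  exact: hom_to_zero.
move=> /below_rcons [l'm jm] x xb0.
have gx0 : comp g x = 0.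
  have [mj | ne_jm] := eqVneq m j; last exact: Theta_hom0.
  move: g h Dfgh; rewrite -mj => g h Dfgh.
  have gxb0 : comp (comp g x) b = 0 by rewrite -comp_assoc xb0 comp0r.
  have [z ->] := Dist_extend (Dist_rot D) gxb0.
  by rewrite (K0 z) comp0l.
have [v xE] := Dist_lift Dfgh gx0.
rewrite xE (IH l'm v) ?comp0r //.
apply: (Dist_comp_inj (y := comp v b) Dfgh); first exact: shift_Q_hom_Theta0.
by rewrite comp_assoc -xE.
Qed.

Lemma Theta_hom_postcomp_inj (Y W Z : Ob) (f : Hom Y W) (g : Hom W Z) (h : Hom Z (shift Y)) l :
  filtered Y l -> below l -> (forall u : Hom (shift (Q m)) Z, u = 0) -> Dist f g h ->
  forall y : Hom (Theta m) Y, comp f y = 0 -> y = 0.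
Proof.
move=> FY lm QZ0 D y fy0; have [K [a [b [c [Dabc _ K0]]]]] := tps_tri HS m.
apply: (Theta_hom_precomp_inj Dabc K0 FY lm).
by apply: (Dist_comp_inj D QZ0); rewrite comp_assoc fy0 comp0l.
Qed.

(* Each cone [Theta m] splits off, since [Hom(Theta m, M0[1]) = 0]; each cone
   [Theta j] with [j <> m] is invisible to [Hom(Theta m, -)]. *)
Lemma Theta_hom_iso_pow (M : Ob) l : filtered M l -> below l ->
  iso_pow (Hom (Theta m) M) (Hom (Theta m) (Theta m)) (count (pred1 m) l).
Proof.
elim=> [Z Z0 _|M0 M1 l' j f g h FM0 IH D /below_rcons [l'm jm]].
  by apply: iso_pow0 => y; apply: hom_to_zero.
have injf : forall y : Hom (Theta m) M0, comp f y = 0 -> y = 0.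
  by apply: (Theta_hom_postcomp_inj FM0 l'm _ D); apply: shift_Q_hom_Theta0.
rewrite -cats1 count_cat /= addn0.
have [jm_eq | ne_jm] := eqVneq j m; last first.
  rewrite addn0; apply: (iso_pow_transport (IH l'm) (linear_comp_r f) injf).
  by move=> y; apply: (Dist_lift D); apply: Theta_hom0; rewrite // eq_sym.
move: g h D; rewrite jm_eq addn1 => g h D.
have h0 : comp h (idm (Theta m)) = 0.
  by apply: (hom_into_shift_filtered0 FM0) => j' /l'm; apply: Theta_ext0.
have [s sE] := Dist_lift (Dist_rot D) h0.
apply: (iso_powS (S := comp s) (P := comp g) (IH l'm) (linear_comp_r f)
  (linear_comp_r s) (linear_comp_r g) injf).
- by move=> x; rewrite comp_assoc (Dist_comp0 D) comp0l.
- by move=> e; rewrite comp_assoc -sE comp_id_l.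
- by move=> y; apply: (Dist_lift D); rewrite compBr comp_assoc -sE comp_id_l subrr.
Qed.

Lemma filtered_split_top (M : Ob) l : filtered M l -> below l ->
  exists (A B : Ob) (i : Hom A M) (p : Hom M B) (d : Hom B (shift A)),
    [/\ Dist i p d, filtered A (filter (pred1 m) l) & filtered B (filter (predC1 m) l)].
Proof.
elim=> [Z Z0 _|M0 M1 l' j u g h _ IH D /below_rcons [l'm jm]].
  have [Z1 Z1_0] := zero_exists.
  exists Z, Z1, (idm Z), 0, 0; split; [exact: Dist_zero_cone | exact: filtered_nil ..].
have [A0 [B0 [i0 [p0 [d0 [D0 FA0 FB0]]]]]] := IH l'm.
rewrite !filter_rcons /=; have [jm_eq | ne_jm] := eqVneq j m; last first.
  have [B1 [p1 [d1 D1]]] := TR1_cone (comp u i0).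
  have [f [g' [Dfg _ _ _ _]]] := TR4 D0 D D1.
  by exists A0, B1, (comp u i0), p1, d1; split=> //; apply: filtered_rcons FB0 Dfg.
move: g h D; rewrite jm_eq => g h D.
(* [p0] extends along [u] since [Hom(Theta m, B0[1]) = 0]. *)
have [q qu] : exists q : Hom M1 B0, comp q u = p0.
  have hp0 : comp (shiftH p0) h = 0.
    apply: (hom_into_shift_filtered0 FB0) => j'.
    by rewrite mem_filter => /andP [_ /l'm]; apply: Theta_ext0.
  have [z zE] := Dist_extend (Dist_rot (Dist_rot D)) hp0.
  have [q qE] := shift_full z; exists (- q); apply: shift_faithful.
  by rewrite zE -qE compNr shift_comp shiftHN compNl.
(* the fibre of [q] is an extension of [Theta m] by [A0] (octahedron) *)
have [A1 [i1 [d1 D1]]] := Dist_fiber q.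
have D0' : Dist (comp q u) d0 (- shiftH i0) by rewrite qu; apply: Dist_rot.
have [f [g' [Dfg _ _ _ _]]] := TR4 D (Dist_rot D1) D0'.
have [g0 g0E] := shift_full g'.
have [j0 j0E] := shift_full (comp (shiftH g) (- shiftH i1)).
exists A1, B0, i1, q, d1; split=> //.
apply: (filtered_rcons (f := - g0) (g := - j0) (h := f) FA0).
by apply/TR2/TR2; rewrite !shiftHN !opprK g0E j0E.
Qed.

Local Notation only_top l := (forall j, j \in l -> j = m).
Local Notation strictly_below l := (forall j, j \in l -> le j m /\ j != m).

Lemma only_top_below l : only_top l -> below l.
Proof. by move=> lm j /lm ->; apply: tps_le_refl. Qed.

Lemma hom_top_strictly_below0 (X Y : Ob) lx ly :
  filtered X lx -> only_top lx -> filtered Y ly -> strictly_below ly ->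
  forall u : Hom X Y, u = 0.
Proof.
move=> FX lxm FY lym; apply: (hom_from_filtered0 FX) => j /lxm ->.
by apply: (hom_into_filtered0 FY) => j' /lym [j'm ne_j'm]; apply: Theta_hom0; rewrite // eq_sym.
Qed.

Lemma split_top_mono (A M B : Ob) (i : Hom A M) (p : Hom M B) (d : Hom B (shift A)) la lb :
  Dist i p d -> filtered A la -> only_top la -> filtered B lb ->
  forall (A0 : Ob) l0, filtered A0 l0 -> only_top l0 ->
  forall x : Hom A0 A, comp i x = 0 -> x = 0.
Proof.
move=> D FA lam FB A0 l0; elim=> [Z Z0|M0 M1 l' j f g h FM0 IH D1] l0m x ix0.
  exact: hom_from_zero.
have l'm : only_top l' by move=> j' /(mem_rcons_l j); apply: l0m.
move: g h D1; rewrite (l0m j (mem_rcons_r _ _)) => g h D1.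
have xf0 : comp x f = 0 by apply: (IH l'm); rewrite comp_assoc ix0 comp0l.
have [z xE] := Dist_extend D1 xf0.
have h0 : h = 0.
  by apply: (hom_into_shift_filtered0 FM0) => j' /l'm ->; apply/Theta_ext0/tps_le_refl.
have izg0 : comp (comp i z) g = 0 by rewrite -comp_assoc -xE ix0.
have [w wE] := Dist_extend (Dist_rot D1) izg0.
have iz0 : comp i z = 0 by rewrite wE h0 comp0r.
rewrite xE (Theta_hom_postcomp_inj FA (only_top_below lam) (shift_Q_hom_filtered0 FB) D iz0).
by rewrite comp0l.
Qed.

Lemma split_top_quotient_iso (M A B A' B' : Ob) (i : Hom A M) (p : Hom M B)
    (d : Hom B (shift A)) (i' : Hom A' M) (p' : Hom M B') (d' : Hom B' (shift A')) la lb la' lb' :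
  Dist i p d -> filtered A la -> only_top la -> filtered B lb -> strictly_below lb ->
  Dist i' p' d' -> filtered A' la' -> only_top la' -> filtered B' lb' -> strictly_below lb' ->
  Iso B B'.
Proof.
move=> D FA lam FB lbm D' FA' lam' FB' lbm'.
have [u iE] := Dist_lift D' (hom_top_strictly_below0 FA lam FB' lbm' (comp p' i)).
have [v i'E] := Dist_lift D (hom_top_strictly_below0 FA' lam' FB lbm (comp p i')).
have vu : comp v u = idm A.
  apply/eqP; rewrite -subr_eq0; apply/eqP; apply: (split_top_mono D FA lam FB FA lam).
  by rewrite compBr comp_assoc -i'E -iE comp_id_r subrr.
have uv : comp u v = idm A'.
  apply/eqP; rewrite -subr_eq0; apply/eqP; apply: (split_top_mono D' FA' lam' FB' FA' lam').
  by rewrite compBr comp_assoc -iE -i'E comp_id_r subrr.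
have D'' : Dist i p' (comp (shiftH v) d').
  apply: (TR1_iso (a := v) (b := idm M) (c := idm B') _ _ _ _ _ _ D').
  - by exists u.
  - exact: IsIso_id.
  - exact: IsIso_id.
  - by rewrite comp_id_l i'E.
  - by rewrite comp_id_l comp_id_r.
  - by rewrite comp_id_r.
exact: Dist_cone_unique D D''.
Qed.

Lemma only_top_filter l : only_top (filter (pred1 m) l).
Proof. by move=> j; rewrite mem_filter => /andP [/eqP]. Qed.

Lemma strictly_below_filter l : below l -> strictly_below (filter (predC1 m) l).
Proof. by move=> lm j; rewrite mem_filter => /andP [ne_jm /lm]. Qed.

End BelowTop.

(* Induction on the set of indices occurring: the multiplicity of the top
   index [m] is read off [Hom(Theta m, M)], and removing the [Theta m]-part
   leaves a quotient that is unique up to isomorphism. *)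
Lemma filtered_count_uniq (M : Ob) (l l' : seq 'I_t) : HomFinite C ->
  filtered M l -> filtered M l' -> forall i, count_mem i l = count_mem i l'.
Proof.
move=> Hfin; have [n] := ubnP (size (undup (l ++ l'))).
elim: n M l l' => // n IHn M l l' /ltnSE size_ll' FM FM' i.
have [ll'0 | /(seq_max_exists tps_le_refl tps_le_trans tps_le_total) [m m_in mmax]] :=
  eqVneq (l ++ l') [::].
  by move: ll'0; case: l {FM size_ll'} => //= ->.
have lm j : j \in l -> le j m by move=> jl; apply: mmax; rewrite mem_cat jl.
have lm' j : j \in l' -> le j m by move=> jl'; apply: mmax; rewrite mem_cat jl' orbT.
have [-> | ne_im] := eqVneq i m.
  apply: (iso_pow_uniq (Hfin _ _) (e := idm (Theta m))); last 2 first.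
  - exact: Theta_hom_iso_pow FM lm.
  - exact: Theta_hom_iso_pow FM' lm'.
  by apply/eqP; apply: (tps_nonzero HS).
have [A [B [io [p [d [D FA FB]]]]]] := filtered_split_top FM lm.
have [A' [B' [io' [p' [d' [D' FA' FB']]]]]] := filtered_split_top FM' lm'.
have isoB : Iso B B' := split_top_quotient_iso D FA (@only_top_filter m l) FB
  (strictly_below_filter lm) D' FA' (@only_top_filter m l') FB' (strictly_below_filter lm').
have countE s : count_mem i (filter (predC1 m) s) = count_mem i s.
  by rewrite count_filter; apply: eq_count => x /=; case: eqP => // ->; rewrite ne_im.
rewrite -countE -(countE l'); apply: (IHn B _ _ _ FB (filtered_iso FB' (Iso_sym isoB))).
rewrite -filter_cat -filter_undup size_filter; apply: leq_trans size_ll'.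
rewrite -[leqRHS](count_predC (predC1 m)) -addn1 leq_add2l -has_count.
by apply/hasP; exists m; rewrite ?mem_undup //= negbK.
Qed.

Lemma Q_hom_Theta_below0 (i j : 'I_t) : le i j -> j != i -> forall x : Hom (Q j) (Theta i), x = 0.
Proof.
move=> le_ij ne_ji x; have [K [a [b [c [D FK _]]]]] := tps_tri HS j.
have [z ->] := Dist_extend D (hom_above_Theta0 le_ij FK (comp x a)).
by rewrite (Theta_hom0 le_ij ne_ji z) comp0l.
Qed.

Lemma Q_nonisomorphic (i j : 'I_t) : i != j -> ~ Iso (Q i) (Q j).
Proof.
wlog le_ij : i j / le i j.
  move=> H ne_ij; case/orP: (tps_le_total i j) => [le_ij | le_ji]; first exact: H.
  by move/Iso_sym; apply: H; rewrite // eq_sym.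
move=> ne_ij [f [g [gf fg]]]; have [K [a [b [c [D _ K0]]]]] := tps_tri HS i.
have b0 : b = 0.
  rewrite -(comp_id_r b) -gf comp_assoc (Q_hom_Theta_below0 le_ij _ (comp b g)) ?comp0l //.
  by rewrite eq_sym.
have idb0 : comp (idm (Theta i)) b = 0 by rewrite b0 comp0r.
have [z zE] := Dist_extend (Dist_rot D) idb0.
by apply: (tps_nonzero HS (i := i)); rewrite /IsZero zE (K0 z) comp0l.
Qed.

Lemma mult_filtered (M : Ob) (xi : filtration (classOf Theta) M) :
  exists l, [/\ filtered M l, size l = flen xi & forall i, mult xi i = count_mem i l].
Proof.
have classS Y : classOf Theta Y -> exists2 j : 'I_t, True & Y = Theta j.
  by case=> j ->; exists j.
by have [l [Fl _ size_l multE]] := filtration_filtered classS xi; exists l.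
Qed.

Lemma mult_uniq (M : Ob) (xi xi' : filtration (classOf Theta) M) (i : 'I_t) :
  HomFinite C -> mult xi i = mult xi' i.
Proof.
move=> Hfin; have [l [Fl _ ->]] := mult_filtered xi; have [l' [Fl' _ ->]] := mult_filtered xi'.
exact: filtered_count_uniq Hfin Fl Fl' i.
Qed.

Lemma sum_mult (M : Ob) (xi : filtration (classOf Theta) M) :
  (\sum_(i < t) mult xi i)%N = flen xi.
Proof.
have [l [_ <- multE]] := mult_filtered xi.
by under eq_bigr do rewrite multE; apply: sum_count_mem.
Qed.

End ThetaProjective.

End Triangulated.

Theorem proposition5p11 (R : comPzRingType) (C : triData R)
  (HC : triangulated C) (Hfin : HomFinite C)
  (t : nat) (le : rel 'I_t) (Theta Q : 'I_t -> Ob C)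
  (HS : ThetaProjSystem le Theta Q) :
  (forall (M : Ob C) (xi xi' : filtration (classOf Theta) M) (i : 'I_t),
      mult xi i = mult xi' i) /\
  (forall (M : Ob C) (xi : filtration (classOf Theta) M),
      IsMinFiltLength Theta M (\sum_(i < t) mult xi i)%N) /\
  (forall i j : 'I_t, i != j -> ~ Iso (Q i) (Q j)).
Proof.
have mult_eq M xi xi' i := mult_uniq HC HS (M := M) xi xi' i Hfin.
split; first exact: mult_eq.
split; last exact: (@Q_nonisomorphic _ _ HC _ _ _ _ HS).
move=> M xi; split; first by exists xi; rewrite (sum_mult HC HS).
by move=> xi'; rewrite (eq_bigr _ (fun i _ => mult_eq M xi xi' i)) (sum_mult HC HS).
Qed.
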